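(* Let $n$ and $0<n_1<\cdots<n_d<n$ be integers with $m_1=n_1$, $m_k=n_k-n_{k-1}$ ($2\le k\le d$), $m_{d+1}=n-n_d$, and equip $\mathrm{Flag}(n_1,\dots,n_d;n)=\{(VJ_1V^{\mathsf T},\dots,VJ_{d+1}V^{\mathsf T}):V\in\mathrm{O}(n)\}\subseteq(\mathbb{R}^{n\times n})^{d+1}$ with the Riemannian metric induced by the Frobenius inner product. Let $V(t)$ be a differentiable curve in $\mathrm{O}(n)$, $c(t)=V(t)(J_1,\dots,J_{d+1})V(t)^{\mathsf T}$, and let $\Lambda(t)\in\mathfrak{so}(n)$ be such that $\dot V(t)=V(t)\Lambda(t)$, with $\Lambda(k,k)(t)\equiv0$ for $k=1,\dots,d+1$. Then $c(t)$ is a geodesic if and only if $V(t)=V(0)\exp(t\Lambda(0))$.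
   Context: $J_k=\operatorname{diag}(-I_{m_1},\dots,-I_{m_{k-1}},I_{m_k},-I_{m_{k+1}},\dots,-I_{m_{d+1}})$ for $k=1,\dots,d+1$. $V(X_1,\dots,X_{d+1})V^{\mathsf T}$ denotes $(VX_1V^{\mathsf T},\dots,VX_{d+1}V^{\mathsf T})$. For an $n\times n$ matrix $M$, $M(p,q)$ denotes its $(p,q)$ block in the partition $n=m_1+\cdots+m_{d+1}$. A curve $c$ is a geodesic iff the orthogonal projection of $\ddot c(t)$ onto $\mathbb{T}_{c(t)}\mathrm{Flag}$ vanishes for all $t$. *)

From mathcomp Require Import all_boot all_order all_algebra.
From mathcomp Require Import all_classical all_reals all_analysis.
Set Implicit Arguments. Unset Strict Implicit. Unset Printing Implicit Defensive.
Import Order.TTheory GRing.Theory Num.Theory.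
Local Open Scope ring_scope.

Section FlagDefs.
Variable R : realType.

Definition mx_derivable_at (p q : nat) (f : R -> 'M[R]_(p, q)) (t : R) : Prop :=
  forall i j, derivable (fun s => f s i j) t 1.

Definition mx_deriv (p q : nat) (f : R -> 'M[R]_(p, q)) (t : R) : 'M[R]_(p, q) :=
  \matrix_(i, j) (derive1 (fun s => f s i j) t).

Definition expm (n : nat) (A : 'M[R]_n) : 'M[R]_n :=
  \matrix_(i, j) limn (fun N : nat => \sum_(k < N) ((A ^+ k) i j / (k`!)%:R)).

(* block index (0-based) of row/column index i for the partition given by
   0 < ns_1 < ... < ns_d < n : block k (0-based) = {i | ns_k <= i < ns_{k+1}} *)
Definition blk {d : nat} (ns : 'I_d -> nat) (i : nat) : nat :=
  #|[set j : 'I_d | (ns j <= i)%N]|.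

Definition Jmat {n d : nat} (ns : 'I_d -> nat) (k : 'I_d.+1) : 'M[R]_n :=
  \matrix_(i, j) (if i == j then (if blk ns i == k then 1 else -1) else 0).

Definition mxtuple (n d : nat) := 'I_d.+1 -> 'M[R]_n.

Definition in_flag {n d : nat} (ns : 'I_d -> nat) (P : mxtuple n d) : Prop :=
  exists V : 'M[R]_n, V^T *m V = 1%:M /\ forall k, P k = V *m Jmat ns k *m V^T.

Definition frob (n d : nat) (X Y : mxtuple n d) : R :=
  \sum_(k < d.+1) \tr ((X k)^T *m Y k).

Definition tangent_flag {n d : nat} (ns : 'I_d -> nat) (P X : mxtuple n d) : Prop :=
  exists g : R -> mxtuple n d,
    (forall s, in_flag ns (g s)) /\ g 0 = P /\
    (forall k, mx_derivable_at (fun s => g s k) 0) /\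
    (forall k, X k = mx_deriv (fun s => g s k) 0).

(* geodesic: twice differentiable curve in Flag whose acceleration has
   vanishing orthogonal projection onto the tangent space, i.e. is
   Frobenius-orthogonal to every tangent vector *)
Definition geodesic {n d : nat} (ns : 'I_d -> nat) (c : R -> mxtuple n d) : Prop :=
  (forall t, in_flag ns (c t)) /\
  (forall t k, mx_derivable_at (fun s => c s k) t) /\
  (forall t k, mx_derivable_at (fun s => mx_deriv (fun u => c u k) s) t) /\
  (forall t X, tangent_flag ns (c t) X ->
     frob (fun k => mx_deriv (fun s => mx_deriv (fun u => c u k) s) t) X = 0).

End FlagDefs.

(* In the moving frame V(t) (with V' = V Lam), the velocity of c_k is
   V [Lam, J_k] V^T, and for constant Lam its acceleration is
   V [Lam, [Lam, J_k]] V^T.  As Lam vanishes on the diagonal blocks, the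
   (p, q) entry of [Lam, [Lam, J_k]] is 2 (Lam^2)_pq whenever exactly one of
   p, q lies in block k, while tangent vectors Y (Y_k J_k + J_k Y_k = 0,
   sum_k Y_k = 0) live on exactly these entries and sum to zero over k; so the
   acceleration is normal and curves with constant Lam are geodesics.
   Conversely, pairing the acceleration with the tangent vector
   ([E_ab - E_ba, J_k])_k, the velocity of a Givens rotation, leaves
   Lam_ab' * sum_k (s_k(b) - s_k(a))^2, where s_k = +-1 is the diagonal of
   J_k (Lam_ab is differentiable because the velocity [Lam, J_k] is); the
   sum is positive when a, b lie in different blocks, so Lam is constant.
   Finally V and V(0) exp(t Lam(0)) solve the same equation W' = W Lam(0),
   whose solutions keep constant Frobenius distance because Lam(0) is skew. *)

From mathcomp Require Import all_boot all_order all_algebra.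
From mathcomp Require Import all_classical all_reals all_analysis.
From mathcomp Require Import ring lra.
Import Order.TTheory GRing.Theory Num.Theory.
Import numFieldNormedType.Exports.
Local Open Scope ring_scope.

Section matrix_derivative.
Context {R : realType}.

Lemma is_derive_mxP {m n} {F : R -> 'M[R]_(m, n)} {t L} :
  is_derive t (1:R) F L <-> forall i j, is_derive t (1:R) (fun s => F s i j) (L i j).
Proof.
split=> [[dF <-] i j | dFij].
  have dFij : derivable (fun s => F s i j) t 1 by move/derivable_mxP : dF; apply.
  by apply: DeriveDef => //; rewrite derive_mx // mxE.
have dF : derivable F t 1 by apply/derivable_mxP => i j; case: (dFij i j).
apply: DeriveDef => //; rewrite derive_mx //; apply/matrixP => i j.
by rewrite mxE; case: (dFij i j).
Qed.

Lemma is_derive_mx_derivable {m n} {F : R -> 'M[R]_(m, n)} {t L} :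
  is_derive t (1:R) F L -> mx_derivable_at F t.
Proof. by move/is_derive_mxP => dF i j; case: (dF i j). Qed.

Lemma mx_derivE {m n} {F : R -> 'M[R]_(m, n)} {t L} :
  is_derive t (1:R) F L -> mx_deriv F t = L.
Proof.
by move/is_derive_mxP => dF; apply/matrixP => i j; rewrite mxE derive1E derive_val.
Qed.

Lemma mx_derivableP {m n} {F : R -> 'M[R]_(m, n)} {t} :
  mx_derivable_at F t -> is_derive t (1:R) F (mx_deriv F t).
Proof.
by move=> dF; apply/is_derive_mxP => i j; rewrite mxE derive1E; apply: derivableP.
Qed.

Lemma is_derive_mulmx {m n p} {F : R -> 'M[R]_(m, n)} {G : R -> 'M[R]_(n, p)} {t F' G'} :
  is_derive t (1:R) F F' -> is_derive t (1:R) G G' ->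
  is_derive t (1:R) (fun s => F s *m G s) (F' *m G t + F t *m G').
Proof.
move=> /is_derive_mxP dF /is_derive_mxP dG; apply/is_derive_mxP => i j.
have -> : (fun s => (F s *m G s) i j) = \sum_l (fun s => F s i l * G s l j).
  by apply/funext => s; rewrite mxE fct_sumE.
rewrite !mxE -big_split; apply: is_derive_sum => l /=.
by rewrite addrC [F' i l * _]mulrC; apply: is_deriveM.
Qed.

Lemma is_derive_trmx {m n} {F : R -> 'M[R]_(m, n)} {t F'} :
  is_derive t (1:R) F F' -> is_derive t (1:R) (fun s => (F s)^T) F'^T.
Proof.
move/is_derive_mxP => dF; apply/is_derive_mxP => i j.
by rewrite mxE; under eq_fun do rewrite mxE; apply: dF.
Qed.

Lemma is_derive_mxtrace {n} {F : R -> 'M[R]_n} {t F'} :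
  is_derive t (1:R) F F' -> is_derive t (1:R) (fun s => \tr (F s)) (\tr F').
Proof.
move/is_derive_mxP => dF.
have -> : (fun s => \tr (F s)) = \sum_i (fun s => F s i i).
  by apply/funext => s; rewrite fct_sumE.
exact: is_derive_sum.
Qed.

Lemma is_derive_unique {V W : normedModType R} {f : V -> W} {x v df df'} :
  is_derive x v f df -> is_derive x v f df' -> df = df'.
Proof. by case=> _ <-; case=> _ <-. Qed.

Lemma is_derive_const_eq0 {V W : normedModType R} {f : V -> W} (c : W) {x v df} :
  (forall s, f s = c) -> is_derive x v f df -> df = 0.
Proof. by move=> /funext -> /is_derive_unique; apply; apply: is_derive_cst. Qed.

Lemma is_derive_scalemx {m n} {f : R -> R} (M : 'M[R]_(m, n)) {t df} :
  is_derive t (1:R) f df -> is_derive t (1:R) (fun s => f s *: M) (df *: M).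
Proof.
move=> df_t; apply/is_derive_mxP => i j; rewrite mxE mulrC.
by under eq_fun do rewrite mxE mulrC; apply: is_deriveZ.
Qed.

End matrix_derivative.

Lemma exprmxZ (R : comPzRingType) n (x : R) (B : 'M[R]_n) k :
  (x *: B) ^+ k = x ^+ k *: B ^+ k.
Proof.
elim: k => [|k IHk]; first by rewrite !expr0 scale1r.
by rewrite !exprS IHk -!mulmxE -scalemxAl -scalemxAr scalerA.
Qed.

Section matrix_exponential.
Context {R : realType} {n : nat} (A : 'M[R]_n).

Let a := \sum_i \sum_j `|A i j|.

Let a_ge0 : 0 <= a.
Proof. by rewrite sumr_ge0 // => i _; rewrite sumr_ge0. Qed.

Lemma norm_exprmx_entry_le k i j : `|(A ^+ k) i j| <= a ^+ k.
Proof.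
have col_le_a l : \sum_r `|A r l| <= a.
  by apply: ler_sum => r _; rewrite (bigD1 l) //= lerDl sumr_ge0.
elim: k i j => [|k IHk] i j.
  by rewrite expr0 mxE; case: (i == j); rewrite /= ?normr1 ?normr0.
rewrite exprSr -mulmxE mxE (le_trans (ler_norm_sum _ _ _)) //.
apply: (@le_trans _ _ (\sum_l a ^+ k * `|A l j|)).
  by apply: ler_sum => l _; rewrite normrM ler_wpM2r.
by rewrite -mulr_sumr exprSr ler_wpM2l // exprn_ge0.
Qed.

(* Entry [(i, j)] of [A ^+ m * expm (x *: A)] is the power series
   [\sum_k expm_coeff i j m k * x ^+ k]. *)
Definition expm_coeff i j m : R ^nat := fun k => (A ^+ (k + m)) i j / k`!%:R.

Lemma expm_coeff_cvg i j m x : cvgn (pseries (expm_coeff i j m) x).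
Proof.
apply: normed_cvg; apply: (@series_le_cvg _ _ (fun k => a ^+ m * exp_coeff (a * `|x|) k)).
- by move=> k; rewrite normr_ge0.
- by move=> k; rewrite mulr_ge0 ?exprn_ge0 ?divr_ge0 ?exprn_ge0 ?mulr_ge0.
- move=> k; rewrite /exp_coeff /expm_coeff /= !normrM normfV normr_nat normrX.
  apply: (@le_trans _ _ (a ^+ (k + m) * (k`!%:R)^-1 * `|x| ^+ k)).
    by rewrite !ler_wpM2r ?exprn_ge0 ?invr_ge0 // norm_exprmx_entry_le.
  by rewrite le_eqVlt exprD exprMn; apply/orP; left; apply/eqP; ring.
- exact: is_cvg_seriesZ (is_cvg_series_exp_coeff (a * `|x|)).
Qed.

Lemma expm_coeff_diffs i j m : pseries_diffs (expm_coeff i j m) = expm_coeff i j m.+1.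
Proof.
apply/funext => k; rewrite /pseries_diffs /expm_coeff factS natrM invfM addSnnS.
by rewrite mulrCA mulVKf // pnatr_eq0.
Qed.

Lemma expm_scale_entry x i j : expm (x *: A) i j = limn (pseries (expm_coeff i j 0) x).
Proof.
rewrite mxE; congr (limn _); apply/funext => N.
rewrite /pseries /series /= big_mkord; apply: eq_bigr => k _.
by rewrite exprmxZ mxE /expm_coeff addn0; ring.
Qed.

Lemma is_derive_expm t :
  is_derive t (1:R) (fun s => expm (s *: A)) (expm (t *: A) *m A).
Proof.
apply/is_derive_mxP => i j; under eq_fun do rewrite expm_scale_entry.
have t_lt : `|t| < Num.norm (`|t| + 1) by rewrite [X in _ < X]ger0_norm ?addr_ge0 // ltrDl.
apply: is_derive_eq.
  apply: pseries_snd_diffs t_lt; rewrite ?expm_coeff_diffs; exact: expm_coeff_cvg.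
rewrite expm_coeff_diffs mxE; under eq_bigr do rewrite expm_scale_entry.
have -> : pseries (expm_coeff i j 1) t =
          (fun N => \sum_l pseries (expm_coeff i l 0) t N * A l j).
  apply/funext => N; rewrite /pseries /series /=.
  under [RHS]eq_bigr do rewrite mulr_suml.
  rewrite exchange_big /=; apply: eq_bigr => k _.
  rewrite /expm_coeff addn1 addn0 exprSr -mulmxE mxE !mulr_suml.
  by apply: eq_bigr => l _; ring.
apply: cvg_lim => //; apply: (@cvg_big _ _ +%R 0 xpredT (@add_continuous _)) => // l _.
exact: cvgMr_tmp (expm_coeff_cvg _ _ _ _).
Qed.

End matrix_exponential.

Lemma expm0 (R : realType) n : expm (0 : 'M[R]_n) = 1%:M.
Proof.
apply/matrixP => i j; rewrite !mxE; apply: lim_near_cst => //.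
near=> N; have N_gt0 : (0 < N)%N by near: N; exists 1%N.
rewrite -(prednK N_gt0) big_ord_recl big1 => [|k _]; last by rewrite exprS mul0r mxE mul0r.
by rewrite expr0 mxE fact0 divr1 addr0.
Unshelve. all: by end_near.
Qed.

Section moving_frames.
Context {R : realType} {n : nat}.
Implicit Types (V W : R -> 'M[R]_n) (L M : 'M[R]_n).

Definition lie L M : 'M[R]_n := L *m M - M *m L.

Lemma lie_entry L M p q : lie L M p q = (L *m M) p q - (M *m L) p q.
Proof. by rewrite !mxE. Qed.

Lemma skew_mx_entry {L} p q : L^T = - L -> L q p = - L p q.
Proof. by move=> /matrixP/(_ p q); rewrite !mxE. Qed.

Lemma orth_conjK (W A : 'M[R]_n) : W^T *m W = 1%:M -> W^T *m (W *m A *m W^T) *m W = A.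
Proof. by move=> orthW; rewrite !mulmxA orthW mul1mx -mulmxA orthW mulmx1. Qed.

Lemma orth_conjVK (W A : 'M[R]_n) : W^T *m W = 1%:M -> W *m (W^T *m A *m W) *m W^T = A.
Proof. by move/mulmx1C=> orthW; rewrite !mulmxA orthW mul1mx -mulmxA orthW mulmx1. Qed.

Lemma mxtrace_trmx_mul (A B : 'M[R]_n) :
  \tr (A^T *m B) = \sum_p \sum_q A p q * B p q.
Proof.
rewrite /mxtrace; under eq_bigr do rewrite mxE.
rewrite exchange_big /=; apply: eq_bigr => p _.
by apply: eq_bigr => q _; rewrite mxE.
Qed.

Lemma is_derive_conj_skew {V L} M {t} : L^T = - L ->
  is_derive t (1:R) V (V t *m L) ->
  is_derive t (1:R) (fun s => V s *m M *m (V s)^T) (V t *m lie L M *m (V t)^T).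
Proof.
move=> skL dV; apply: is_derive_eq.
  apply: is_derive_mulmx (is_derive_trmx dV).
  exact: is_derive_mulmx dV (is_derive_cst M t 1).
by rewrite mulmx0 addr0 trmx_mul skL /lie mulNmx mulmxN mulmxBr mulmxBl !mulmxA.
Qed.

Lemma is_derive_pullback_skew {V L C C' t} : L^T = - L ->
  is_derive t (1:R) V (V t *m L) -> is_derive t (1:R) C C' ->
  is_derive t (1:R) (fun s => (V s)^T *m C s *m V s)
    ((V t)^T *m C' *m V t - lie L ((V t)^T *m C t *m V t)).
Proof.
move=> skL dV dC; apply: is_derive_eq.
  exact: is_derive_mulmx (is_derive_mulmx (is_derive_trmx dV) dC) dV.
rewrite trmx_mul skL /lie mulmxDl !mulmxA mulNmx opprB.
by rewrite [LHS]addrAC [LHS]addrC !mulNmx [X in _ + X]addrC.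
Qed.

Lemma mxtrace_trmx_mul_eq0 (A : 'M[R]_n) : \tr (A^T *m A) = 0 -> A = 0.
Proof.
have self_mul_ge0 (x : R) : 0 <= x * x by rewrite -expr2 sqr_ge0.
rewrite mxtrace_trmx_mul => sum_sq0; apply/matrixP => p q; rewrite mxE.
have row_sq0 : \sum_q' A p q' * A p q' = 0.
  by apply: (psumr_eq0P _ sum_sq0) => // p' _; apply: sumr_ge0.
by apply/eqP; rewrite -[_ == 0]orbb -mulf_eq0; apply/eqP/(psumr_eq0P _ row_sq0).
Qed.

Lemma sum_mul_delta_mx (F : 'I_n -> 'I_n -> R) a b :
  \sum_p \sum_q F p q * delta_mx a b p q = F a b.
Proof.
rewrite (bigD1 a) //= [X in _ + X]big1 ?addr0 => [|p /negPf ne_pa]; last first.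
  by apply: big1 => q _; rewrite mxE ne_pa mulr0.
rewrite (bigD1 b) //= big1 ?addr0 => [|q /negPf ne_qb]; first by rewrite mxE !eqxx mulr1.
by rewrite mxE eqxx ne_qb mulr0.
Qed.

(* [V - W] solves the same equation, and skewness of [L] makes the
   Frobenius norm of a solution constant. *)
Lemma skew_flow_unique {V W L} : L^T = - L ->
  (forall t, is_derive t (1:R) V (V t *m L)) ->
  (forall t, is_derive t (1:R) W (W t *m L)) ->
  V 0 = W 0 -> forall t, V t = W t.
Proof.
move=> skL dV dW VW0 t; apply/eqP; rewrite -subr_eq0; apply/eqP.
pose D s := V s - W s.
have dD s : is_derive s (1:R) D (D s *m L).
  by have := is_deriveB (dV s) (dW s); rewrite -mulmxBl.
pose N s := \tr ((D s)^T *m D s).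
have dN s : is_derive s (1:R) N 0.
  have := is_derive_mxtrace (is_derive_mulmx (is_derive_trmx (dD s)) (dD s)).
  by rewrite /= trmx_mul skL !mulNmx -!mulmxA mxtraceD linearN /= mxtrace_mulC !mulmxA addNr.
apply: mxtrace_trmx_mul_eq0; rewrite -/(N t) (is_derive_0_is_cst t 0 dN).
by rewrite /N /D VW0 subrr trmx0 mul0mx mxtrace0.
Qed.

End moving_frames.

Definition skew_delta {R : pzRingType} {n} (a b : 'I_n) : 'M[R]_n :=
  delta_mx a b - delta_mx b a.

Lemma trmx_skew_delta {R : pzRingType} {n} (a b : 'I_n) :
  (skew_delta a b : 'M[R]_n)^T = - skew_delta a b.
Proof. by rewrite linearB /= !trmx_delta opprB. Qed.

Lemma skew_delta_cube {R : pzRingType} {n} (a b : 'I_n) : a != b ->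
  let K : 'M[R]_n := skew_delta a b in K *m K *m K = - K.
Proof.
move=> ne_ab K.
have KK : K *m K = - (delta_mx a a + delta_mx b b).
  rewrite /K /skew_delta mulmxBl !mulmxBr !mul_delta_mx_cond !eqxx eq_sym (negPf ne_ab).
  by rewrite !mulr0n !mulr1n subr0 sub0r opprD.
rewrite KK /K /skew_delta mulNmx mulmxDl !mulmxBr !mul_delta_mx_cond !eqxx.
by rewrite (negPf ne_ab) eq_sym (negPf ne_ab) !mulr0n !mulr1n subr0 sub0r.
Qed.

Section rotations.
Context {R : realType} {n : nat}.
Implicit Types K : 'M[R]_n.

(* Rodrigues' formula: when [K *m K *m K = - K], this is [expm (s *: K)]. *)
Definition rot_mx K (s : R) : 'M[R]_n := 1%:M + sin s *: K + (1 - cos s) *: (K *m K).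

Lemma rot_mx0 K : rot_mx K 0 = 1%:M.
Proof. by rewrite /rot_mx sin0 cos0 subrr !scale0r !addr0. Qed.

Lemma is_derive_rot_mx0 K : is_derive (0:R) (1:R) (rot_mx K) K.
Proof.
have dcos : is_derive (0:R) (1:R) (fun s => 1 - cos s) (0 - - sin 0).
  exact: is_deriveB.
have := is_deriveD (is_deriveD (is_derive_cst (1%:M : 'M[R]_n) (0:R) (1:R))
  (is_derive_scalemx K (is_derive_sin 0))) (is_derive_scalemx (K *m K) dcos).
by rewrite cos0 sin0 oppr0 subr0 scale0r addr0 add0r scale1r.
Qed.

Lemma rot_mx_orth K s : K^T = - K -> K *m K *m K = - K ->
  (rot_mx K s)^T *m rot_mx K s = 1%:M.
Proof.
move=> skK cubeK; set P := K *m K.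
have KP : K *m P = - K by rewrite /P mulmxA.
have PP : P *m P = - P by rewrite {1}/P -mulmxA KP mulmxN.
have trP : P^T = P by rewrite /P trmx_mul skK mulmxN mulNmx opprK.
have trQ : (rot_mx K s)^T = 1%:M + (- sin s) *: K + (1 - cos s) *: P.
  by rewrite !linearD /= !linearZ /= tr_scalar_mx skK trP scalerN scaleNr.
rewrite trQ /rot_mx -/P !mulmxDl !mulmxDr -!scalemxAl -!scalemxAr !scalerA.
rewrite !mul1mx !mulmx1 -/P KP cubeK PP mulNr -expr2 sin2cos2.
by apply/matrixP => i j; rewrite !mxE; ring.
Qed.
End rotations.

Lemma blk_lt {n d} (ns : 'I_d -> nat) (i : 'I_n) : (blk ns i < d.+1)%N.
Proof. by rewrite ltnS /blk (leq_trans (max_card _)) // card_ord. Qed.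

Section flag_blocks.
Context {R : realType} {n d : nat} {ns : 'I_d -> nat}.
Local Notation J := (@Jmat R n d ns).
Implicit Types (L M : 'M[R]_n) (k : 'I_d.+1).

Definition blk_sgn k (i : 'I_n) : R := if blk ns i == k then 1 else -1.

Definition blk_offdiag L := forall p q : 'I_n, blk ns p = blk ns q -> L p q = 0.

Lemma mulmx_Jmat M k i j : (M *m J k) i j = M i j * blk_sgn k j.
Proof.
rewrite mxE (bigD1 j) //= big1 ?addr0 => [|l /negPf ne_lj]; first by rewrite mxE eqxx.
by rewrite mxE ne_lj mulr0.
Qed.

Lemma Jmat_mulmx M k i j : (J k *m M) i j = blk_sgn k i * M i j.
Proof.
rewrite mxE (bigD1 i) //= big1 ?addr0 => [|l /negPf ne_li]; first by rewrite mxE eqxx.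
by rewrite mxE eq_sym ne_li mul0r.
Qed.

Lemma blk_sgn_cases k i :
  (blk_sgn k i = 1 /\ blk ns i = k) \/ (blk_sgn k i = -1 /\ blk ns i <> k).
Proof. by rewrite /blk_sgn; case: eqP => ?; [left | right]. Qed.

Lemma Jmat_sqr k : J k *m J k = 1%:M.
Proof.
apply/matrixP => i j; rewrite Jmat_mulmx !mxE.
case: eqP => [->|_]; last by rewrite mulr0.
by rewrite /blk_sgn; case: ifP; rewrite ?mulr1 ?mulrN1 ?opprK.
Qed.

Lemma sum_blk_sgn i : \sum_k blk_sgn k i = 1 - d%:R.
Proof.
rewrite (bigD1 (Ordinal (blk_lt ns i))) //= /blk_sgn eqxx.
rewrite (eq_bigr (fun _ => -1)) => [|k ne_k]; last first.
  by case: eqP => // blk_i; case/eqP: ne_k; apply: val_inj.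
by rewrite sumr_const cardC1 card_ord mulNrn.
Qed.

Lemma sum_Jmat : \sum_k J k = (1 - d%:R)%:M.
Proof.
apply/matrixP => i j; rewrite summxE !mxE.
case: eqP => [->|ne_ij]; last by rewrite mulr0n big1 // => k _; rewrite mxE (introF eqP ne_ij).
by rewrite mulr1n -(sum_blk_sgn j); apply: eq_bigr => k _; rewrite mxE eqxx.
Qed.

Lemma lie_Jmat_entry L k p q :
  lie L (J k) p q = L p q * (blk_sgn k q - blk_sgn k p).
Proof. by rewrite lie_entry mulmx_Jmat Jmat_mulmx; ring. Qed.

Lemma lie_lie_Jmat_entry L k p q : lie L (lie L (J k)) p q =
  \sum_l L p l * L l q * (blk_sgn k p + blk_sgn k q - 2 * blk_sgn k l).
Proof.
rewrite lie_entry !mxE -sumrB; apply: eq_bigr => l _.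
by rewrite !lie_Jmat_entry; ring.
Qed.

(* When exactly one of [p], [q] lies in block [k], every index [l] that
   contributes to [(L *m L) p q] lies outside block [k]. *)
Lemma lie_lie_Jmat_mixed L k p q : blk_offdiag L ->
  blk_sgn k p + blk_sgn k q = 0 -> lie L (lie L (J k)) p q = 2 * (L *m L) p q.
Proof.
move=> offL sgn_pq; rewrite lie_lie_Jmat_entry mxE mulr_sumr.
apply: eq_bigr => l _; rewrite sgn_pq sub0r.
case: (blk_sgn_cases k l) => -[-> blk_l]; last by ring.
case: (blk_sgn_cases k p) => -[sgn_p blk_p].
  by rewrite (offL p l) ?blk_p ?blk_l // !mul0r mulr0.
case: (blk_sgn_cases k q) => -[sgn_q blk_q].
  by rewrite (offL l q) ?blk_q ?blk_l // !(mul0r, mulr0).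
by move: sgn_pq; rewrite sgn_p sgn_q; lra.
Qed.

(* The linearization at [J] of the equations [P k *m P k = 1] and
   [\sum_k P k = (1 - d)%:M] cutting out the flag manifold. *)
Definition Jtangent (Y : mxtuple R n d) :=
  (forall k, Y k *m J k + J k *m Y k = 0) /\ \sum_k Y k = 0.

Lemma Jtangent_lie L : Jtangent (fun k => lie L (J k)).
Proof.
split=> [k|].
  rewrite /lie mulmxBl mulmxBr -!mulmxA Jmat_sqr !mulmxA Jmat_sqr mulmx1 mul1mx.
  by rewrite addrC subrKA subrr.
by rewrite sumrB -mulmx_sumr -mulmx_suml sum_Jmat scalar_mxC subrr.
Qed.

Lemma frob_lie_lie_Jtangent {L Y} : blk_offdiag L -> Jtangent Y ->
  frob (fun k => lie L (lie L (J k))) Y = 0.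
Proof.
move=> offL [anti_Y sum_Y].
have Y_mixed k p q : blk_sgn k p + blk_sgn k q != 0 -> Y k p q = 0.
  move=> sgn_pq; have /matrixP/(_ p q) := anti_Y k.
  rewrite mxE mulmx_Jmat Jmat_mulmx mxE [_ * Y k p q]mulrC -mulrDr => /eqP.
  by rewrite mulf_eq0 addrC (negPf sgn_pq) orbF => /eqP.
rewrite /frob; under eq_bigr do rewrite mxtrace_trmx_mul.
rewrite exchange_big big1 // => p _; rewrite exchange_big big1 // => q _.
rewrite (eq_bigr (fun k => 2 * (L *m L) p q * Y k p q)) => [|k _].
  by rewrite -mulr_sumr -summxE sum_Y !mxE mulr0.
have [sgn_pq|sgn_pq] := eqVneq (blk_sgn k p + blk_sgn k q) 0.
  by rewrite lie_lie_Jmat_mixed.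
by rewrite Y_mixed // !mulr0.
Qed.

Lemma mxtrace_lie_skew_delta M k a b :
  \tr (M^T *m lie (skew_delta a b) (J k)) = (M a b + M b a) * (blk_sgn k b - blk_sgn k a).
Proof.
pose F p q := M p q * (blk_sgn k q - blk_sgn k p).
have -> : (M a b + M b a) * (blk_sgn k b - blk_sgn k a) = F a b - F b a by rewrite /F; ring.
rewrite -!sum_mul_delta_mx -sumrB mxtrace_trmx_mul; apply: eq_bigr => p _.
by rewrite -sumrB; apply: eq_bigr => q _; rewrite lie_Jmat_entry /F !mxE; ring.
Qed.
End flag_blocks.

Arguments blk_sgn {R n d} ns k i.
Arguments blk_offdiag {R n d} ns L.
Arguments Jtangent {R n d} ns Y.


(* Differentiating [f i = c i * g] and substituting into the constraint
   gives [g' * \sum_i c i ^+ 2 = 0]. *)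
Lemma is_derive_eq0_of_proportional {R : realType} {I : finType}
    (f : I -> R -> R) (c : I -> R) {g : R -> R} {t f'} (i0 : I) :
  (forall i s, f i s = c i * g s) -> (forall i, is_derive t (1:R) (f i) (f' i)) ->
  c i0 != 0 -> \sum_i c i * f' i = 0 -> is_derive t (1:R) g 0.
Proof.
move=> f_eq df ci0_neq0 sum_cf'.
pose g' := (c i0)^-1 * f' i0.
have dg : is_derive t (1:R) g g'.
  have -> : g = (c i0)^-1 \*: f i0 by apply/funext => s; rewrite /= f_eq [_ *: _]mulKf.
  exact: is_deriveZ.
have f'_eq i : f' i = c i * g'.
  by apply: is_derive_unique (df i) _; rewrite (funext (f_eq i)); apply: is_deriveZ.
have sum_sqr_gt0 : 0 < \sum_i c i ^+ 2.
  rewrite (bigD1 i0) //= ltr_pwDl ?exprn_even_gt0 //.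
  by apply: sumr_ge0 => i _; apply: sqr_ge0.
have /eqP : g' * \sum_i c i ^+ 2 = 0.
  by rewrite mulr_sumr -[RHS]sum_cf'; apply: eq_bigr => i _; rewrite f'_eq; ring.
by rewrite mulf_eq0 (gt_eqF sum_sqr_gt0) orbF => /eqP <-.
Qed.

Section flag_geometry.
Context {R : realType} {n d : nat} {ns : 'I_d -> nat}.
Local Notation J := (@Jmat R n d ns).
Implicit Types (W : 'M[R]_n) (X Y : mxtuple R n d).

Definition flag_pt W : mxtuple R n d := fun k => W *m J k *m W^T.

Lemma frob_conjr X Y W :
  frob X (fun k => W *m Y k *m W^T) = frob (fun k => W^T *m X k *m W) Y.
Proof.
apply: eq_bigr => k _.
by rewrite !trmx_mul trmxK !mulmxA mxtrace_mulC !mulmxA.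
Qed.

Lemma frobBl X1 X2 Y : frob (fun k => X1 k - X2 k) Y = frob X1 Y - frob X2 Y.
Proof.
by rewrite /frob -sumrB; apply: eq_bigr => k _; rewrite linearB /= mulmxBl linearB.
Qed.

Lemma in_flag_sqr (P : mxtuple R n d) k : in_flag ns P -> P k *m P k = 1%:M.
Proof.
case=> W [orthW ->]; rewrite -!mulmxA (mulmxA W^T) orthW mul1mx.
by rewrite (mulmxA (J k)) Jmat_sqr mul1mx mulmx1C.
Qed.

Lemma in_flag_sum (P : mxtuple R n d) : in_flag ns P -> \sum_k P k = (1 - d%:R)%:M.
Proof.
case=> W [orthW P_eq]; under eq_bigr do rewrite P_eq.
rewrite -mulmx_suml -mulmx_sumr sum_Jmat mul_mx_scalar -scalemxAl.
by rewrite (mulmx1C orthW) scalemx1.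
Qed.

Lemma tangent_flag_Jtangent {W X} : W^T *m W = 1%:M ->
  tangent_flag ns (flag_pt W) X -> Jtangent ns (fun k => W^T *m X k *m W).
Proof.
move=> orthW [g [g_flag [g0 [dg X_eq]]]].
have dgk k : is_derive (0:R) (1:R) (fun s => g s k) (X k).
  by rewrite X_eq; apply: mx_derivableP.
have X_anti k : X k *m flag_pt W k + flag_pt W k *m X k = 0.
  rewrite -g0; apply: (is_derive_const_eq0 1%:M _ (is_derive_mulmx (dgk k) (dgk k))).
  by move=> s; apply: in_flag_sqr.
have X_sum : \sum_k X k = 0.
  apply: (is_derive_const_eq0 (1 - d%:R)%:M _ (is_derive_sum dgk)).
  by move=> s; rewrite fct_sumE; apply: in_flag_sum.
split=> [k|]; last by rewrite -mulmx_suml -mulmx_sumr X_sum mulmx0 mul0mx.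
have /(congr1 (fun M => W^T *m M *m W)) := X_anti k.
rewrite /flag_pt mulmxDr mulmxDl mulmx0 mul0mx !mulmxA orthW mul1mx.
by rewrite -!mulmxA orthW mulmx1 !mulmxA.
Qed.

Lemma tangent_flag_lie {W K} : W^T *m W = 1%:M -> K^T = - K -> K *m K *m K = - K ->
  tangent_flag ns (flag_pt W) (fun k => W *m lie K (J k) *m W^T).
Proof.
move=> orthW skK cubeK; pose U s := W *m rot_mx K s.
have U0 : U 0 = W by rewrite /U rot_mx0 mulmx1.
have dU : is_derive (0:R) (1:R) U (U 0 *m K).
  rewrite U0; have := is_derive_mulmx (is_derive_cst W (0:R) (1:R)) (is_derive_rot_mx0 K).
  by rewrite mul0mx add0r.
have dflag k := is_derive_conj_skew (J k) skK dU.
exists (fun s => flag_pt (U s)); split; last split; last split.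
- move=> s; exists (U s); split=> //.
  by rewrite trmx_mul mulmxA -(mulmxA _ W^T) orthW mulmx1 rot_mx_orth.
- by rewrite U0.
- by move=> k; apply: is_derive_mx_derivable (dflag k).
- by move=> k; rewrite (mx_derivE (dflag k)) U0.
Qed.
End flag_geometry.

Arguments flag_pt {R n d} ns W k.

Section flag_geodesics.
Context {R : realType} {n d : nat} {ns : 'I_d -> nat}.
Local Notation J := (@Jmat R n d ns).
Context {V : R -> 'M[R]_n}.
Hypothesis orthV : forall t, (V t)^T *m V t = 1%:M.

Definition flag_accel (c : R -> mxtuple R n d) t : mxtuple R n d :=
  fun k => mx_deriv (fun s => mx_deriv (fun u => c u k) s) t.

Let c t := flag_pt ns (V t).

Lemma geodesic_of_skew_flow {L} : L^T = - L -> blk_offdiag ns L ->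
  (forall t, is_derive t (1:R) V (V t *m L)) -> geodesic ns c.
Proof.
move=> skL offL dV.
have dc k t := is_derive_conj_skew (J k) skL (dV t).
have dc_eq k : mx_deriv (fun s => c s k) = fun s => V s *m lie L (J k) *m (V s)^T.
  by apply/funext => s; rewrite (mx_derivE (dc k s)).
have ddc k t := is_derive_conj_skew (lie L (J k)) skL (dV t).
split; first by move=> t; exists (V t).
split; first by move=> t k; apply: is_derive_mx_derivable (dc k t).
split; first by move=> t k; rewrite dc_eq; apply: is_derive_mx_derivable (ddc k t).
move=> t X tanX.
have -> : X = fun k => V t *m ((V t)^T *m X k *m V t) *m (V t)^T.
  by apply/funext => k; rewrite orth_conjVK.
rewrite -/(flag_accel c t) frob_conjr.
have -> : (fun k => (V t)^T *m flag_accel c t k *m V t) = fun k => lie L (lie L (J k)).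
  by apply/funext => k; rewrite /flag_accel dc_eq (mx_derivE (ddc k t)) orth_conjK.
exact: frob_lie_lie_Jtangent offL (tangent_flag_Jtangent (orthV t) tanX).
Qed.

Context {Lam : R -> 'M[R]_n}.
Hypothesis skLam : forall t, (Lam t)^T = - Lam t.
Hypothesis offLam : forall t, blk_offdiag ns (Lam t).
Hypothesis dV : forall t, is_derive t (1:R) V (V t *m Lam t).

(* [Lam] is not assumed differentiable, but [lie (Lam s) (J k)] is: it is the
   velocity of [c] seen in the frame [V]. *)
Lemma geodesic_is_derive_lie_Jmat : geodesic ns c -> forall t k,
  is_derive t (1:R) (fun s => lie (Lam s) (J k))
    ((V t)^T *m flag_accel c t k *m V t - lie (Lam t) (lie (Lam t) (J k))).
Proof.
move=> [_ [_ [ddc _]]] t k.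
have dc s := is_derive_conj_skew (J k) (skLam s) (dV s).
have lie_eq s : lie (Lam s) (J k) = (V s)^T *m mx_deriv (fun u => c u k) s *m V s.
  by rewrite (mx_derivE (dc s)) orth_conjK.
rewrite (funext lie_eq) lie_eq.
exact: is_derive_pullback_skew (skLam t) (dV t) (mx_derivableP (ddc t k)).
Qed.

Lemma geodesic_is_derive_offdiag {a b : 'I_n} : geodesic ns c ->
  blk ns a != blk ns b -> forall t, is_derive t (1:R) (fun s => Lam s a b) 0.
Proof.
move=> geo ne_ab t; pose K : 'M[R]_n := skew_delta a b.
pose B' k := (V t)^T *m flag_accel c t k *m V t - lie (Lam t) (lie (Lam t) (J k)).
have dB k := geodesic_is_derive_lie_Jmat geo t k.
have frob_B' : frob B' (fun k => lie K (J k)) = 0.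
  have tanK : tangent_flag ns (c t) (fun k => V t *m lie K (J k) *m (V t)^T).
    apply: tangent_flag_lie (orthV t) (trmx_skew_delta a b) _.
    by apply: skew_delta_cube; apply: contraNneq ne_ab => ->.
  rewrite frobBl -frob_conjr geo.2.2.2 //.
  by rewrite (frob_lie_lie_Jtangent (offLam t) (Jtangent_lie K)) subr0.
pose kb : 'I_d.+1 := Ordinal (blk_lt ns b).
have sgn_kb : blk_sgn ns kb b - blk_sgn ns kb a = 2 :> R.
  by rewrite /blk_sgn eqxx (negPf ne_ab) opprK.
apply: (is_derive_eq0_of_proportional
  (fun k s => lie (Lam s) (J k) a b + lie (Lam s) (J k) b a)
  (fun k => 2 * (blk_sgn ns k b - blk_sgn ns k a)) kb).
- by move=> k s; rewrite !lie_Jmat_entry (skew_mx_entry a b (skLam s)); ring.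
- by move=> k; move/is_derive_mxP: (dB k) => dBk; apply: is_deriveD.
- by rewrite sgn_kb mulf_neq0.
transitivity (2 * frob B' (fun k => lie K (J k))); last by rewrite frob_B' mulr0.
rewrite /frob mulr_sumr; apply: eq_bigr => k _.
by rewrite mxtrace_lie_skew_delta; ring.
Qed.

Lemma geodesic_velocity_const : geodesic ns c -> forall t, Lam t = Lam 0.
Proof.
move=> geo t; apply/matrixP => a b.
have [eq_ab|ne_ab] := eqVneq (blk ns a) (blk ns b); first by rewrite !offLam.
exact: is_derive_0_is_cst (geodesic_is_derive_offdiag geo ne_ab).
Qed.

End flag_geodesics.

Theorem proposition4p6 (R : realType) (n d : nat) (ns : 'I_d -> nat)
  (hns_pos : forall i, (0 < ns i)%N) (hns_lt : forall i, (ns i < n)%N)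
  (hns_incr : forall i j : 'I_d, (i < j)%N -> (ns i < ns j)%N)
  (V Lam : R -> 'M[R]_n)
  (hVorth : forall t, (V t)^T *m V t = 1%:M)
  (hVdiff : forall t, mx_derivable_at V t)
  (hLskew : forall t, (Lam t)^T = - Lam t)
  (hVdot : forall t, mx_deriv V t = V t *m Lam t)
  (hLdiag : forall t (i j : 'I_n), blk ns i = blk ns j -> Lam t i j = 0) :
  geodesic ns (fun t (k : 'I_d.+1) => V t *m @Jmat R n d ns k *m (V t)^T)
  <-> (forall t, V t = V 0 *m expm (t *: Lam 0)).
Proof.
(* Only block membership [blk ns] enters the argument. *)
have dV t : is_derive t (1:R) V (V t *m Lam t) by rewrite -hVdot; apply: mx_derivableP.
pose E t := V 0 *m expm (t *: Lam 0).
have dE t : is_derive t (1:R) E (E t *m Lam 0).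
  have := is_derive_mulmx (is_derive_cst (V 0) t (1:R)) (is_derive_expm (Lam 0) t).
  by rewrite mul0mx add0r mulmxA.
split=> [geo | V_eq].
- have Lam_const := geodesic_velocity_const hVorth hLskew hLdiag dV geo.
  apply: (skew_flow_unique (hLskew 0) _ dE); last by rewrite /E scale0r expm0 mulmx1.
  by move=> t; rewrite -(Lam_const t).
- apply: (geodesic_of_skew_flow hVorth (hLskew 0) (hLdiag 0)) => t.
  by rewrite (funext V_eq); apply: dE.
Qed.
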